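(* Suppose $\mathbf{a} \in \mathrm{Aut}_1(U^+)$ and the lift of $\mathbf{a}$ to $\mathbb{C} \times \mathbb{C} \setminus \overline{\mathbb{D}}$, say $\tilde{\mathbf{a}}$ that preserves the fibres, is of the form $\tilde{\mathbf{a}}(z, \zeta) = (\beta z + \gamma, \alpha \zeta)$ where $\beta^{d-1} = 1$, $\alpha^{d+1} = \beta$ and $\gamma \in \mathbb{C}$. Then the fibre-preserving lifts of $\Phi_H^\pm(\mathbf{a})$, denoted by $\widetilde{\Phi_H^\pm(\mathbf{a})}$, are respectively of the forms $$\widetilde{\Phi_H^+(\mathbf{a})}(z, \zeta) = \left(\beta z + \left(\frac{a}{d} \right) \gamma - c_\alpha, \alpha^d \zeta \right) \quad \text{and} \quad \widetilde{\Phi_H^-(\mathbf{a})}(z, \zeta) = \left(\beta z + \left(\frac{d}{a} \right) \gamma + c_\alpha, \alpha^d \zeta \right).$$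
   Context: Let $H(x,y) = (y, y^d + a_{d-2}y^{d-2} + \dots + a_0 - ax)$ be a Hénon map with $d \geq 2$ and $a \neq 0$ (i.e. $H(x,y)=(y,p(y)-ax)$ with $p$ a centered monic polynomial of degree $d$). Let $K^+$ be the set of points with bounded forward orbit and $U^+ = \mathbb{C}^2 \setminus K^+$ the escaping set. $\mathrm{Aut}_1(U^+)$ denotes the group of automorphisms of $U^+$ inducing the identity on $\pi_1(U^+) \simeq \mathbb{Z}[1/d]$. By Hubbard–Oberste-Vorth, there is a covering $\widehat{\Pi}: \mathbb{C} \times \mathbb{C} \setminus \overline{\mathbb{D}} \to U^+$ corresponding to the subgroup $\mathbb{Z} \subset \pi_1(U^+)$, under which $H$ lifts to $\tilde{H}(z, \zeta) = \left(\frac{a}{d}z + Q(\zeta), \zeta^d \right)$ with $Q(\zeta) = \zeta^{d+1} + A_{d-1}\zeta^{d-1} + \dots + A_0$. Every element of $\mathrm{Aut}_1(U^+)$ has a unique fibre-preserving lift to this covering, of the form $(z,\zeta)\mapsto(\beta z + \gamma, \alpha \zeta)$ with $\alpha^{d^2-1}=1$, $\beta=\alpha^{d+1}$, and for such $\alpha$ one has $\alpha^{d+1} Q(\zeta) = Q(\alpha \zeta) + c_\alpha$ for a constant $c_\alpha \in \mathbb{C}$ (namely $c_\alpha = \alpha^{d+1}A_0 - A_0$). The maps $\Phi_H^+, \Phi_H^-$ on $\mathrm{Aut}(U^+)$ are defined by $\Phi_H^+(f) = H \circ f \circ H^{-1}$ and $\Phi_H^-(f) = H^{-1} \circ f \circ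 H$; they are mutually inverse group isomorphisms preserving $\mathrm{Aut}_1(U^+)$.
   Formalization: The constant term in the first coordinate of the fibre-preserving lift of $\Phi_H^-(\mathbf{a})$ is $(\frac{d}{a})(\gamma + c_\alpha)$ in place of $(\frac{d}{a})\gamma + c_\alpha$. The statement above fails without it. *)

From HB Require Import structures.
From mathcomp Require Import all_boot all_order all_algebra.
From mathcomp Require Import complex reals.
Set Implicit Arguments. Unset Strict Implicit. Unset Printing Implicit Defensive.
Import Order.TTheory GRing.Theory Num.Theory.
Local Open Scope ring_scope.

Section Henon.
Variable R : realType.
Local Notation C := R[i].

Definition centered_monic_deg (d : nat) (p : {poly C}) : Prop :=
  p \is monic /\ size p = d.+1 /\ p`_d.-1 = 0.

Definition henon (p : {poly C}) (a : C) (w : C * C) : C * C :=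
  (w.2, p.[w.2] - a * w.1).
Definition henon_inv (p : {poly C}) (a : C) (w : C * C) : C * C :=
  ((p.[w.1] - w.2) / a, w.1).

Definition Kplus (p : {poly C}) (a : C) (w : C * C) : Prop :=
  exists M : C, forall n : nat,
    `|(iter n (henon p a) w).1| <= M /\ `|(iter n (henon p a) w).2| <= M.
Definition Uplus (p : {poly C}) (a : C) (w : C * C) : Prop := ~ Kplus p a w.

Definition covdom (w : C * C) : Prop := 1 < `|w.2|.

Definition Qshape (d : nat) (Q : {poly C}) : Prop :=
  Q \is monic /\ size Q = d.+2 /\ Q`_d = 0.

Definition Htilde (d : nat) (a : C) (Q : {poly C}) (w : C * C) : C * C :=
  (a / d%:R * w.1 + Q.[w.2], w.2 ^+ d).

(* An (set-theoretic) automorphism of U^+ : a bijection of U^+ onto itself. *)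
Definition aut_Uplus (p : {poly C}) (a : C) (f : C * C -> C * C) : Prop :=
  (forall w, Uplus p a w -> Uplus p a (f w)) /\
  exists g : C * C -> C * C,
    (forall w, Uplus p a w -> Uplus p a (g w)) /\
    (forall w, Uplus p a w -> g (f w) = w) /\
    (forall w, Uplus p a w -> f (g w) = w).

Definition PhiP (p : {poly C}) (a : C) (f : C * C -> C * C) : C * C -> C * C :=
  fun w => henon p a (f (henon_inv p a w)).
Definition PhiM (p : {poly C}) (a : C) (f : C * C -> C * C) : C * C -> C * C :=
  fun w => henon_inv p a (f (henon p a w)).

Definition is_lift (Pi : C * C -> C * C) (f L : C * C -> C * C) : Prop :=
  forall w, covdom w -> covdom (L w) /\ Pi (L w) = f (Pi w).

Definition affine_lift (beta gamma alpha : C) (w : C * C) : C * C :=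
  (beta * w.1 + gamma, alpha * w.2).

Definition c_alpha (d : nat) (Q : {poly C}) (alpha : C) : C :=
  alpha ^+ d.+1 * Q`_0 - Q`_0.

End Henon.

From HB Require Import structures.
From mathcomp Require Import all_boot all_order all_algebra.
From mathcomp Require Import complex reals.
From mathcomp Require Import ring zify.
Set Implicit Arguments. Unset Strict Implicit. Unset Printing Implicit Defensive.
Import Order.TTheory GRing.Theory Num.Theory.
Local Open Scope ring_scope.

(** Both lifts are obtained by conjugating the lift [ã] of [a] by the lift
    [Htilde] of [H]: it suffices that the proposed affine map [Ã] intertwines
    [Htilde], i.e. [Htilde o ã = Ã o Htilde] for [Φ_H^+] and
    [Htilde o Ã = ã o Htilde] for [Φ_H^-].  These two identities come from the twisted equivariance
    [Q(α ζ) = β Q(ζ) - c_α] together with [α^(d^2) = α] and [β^d = β],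
    which hold because [α^(d^2-1) = 1]; the latter also gives [|α| = 1],
    so that the new lifts preserve [C x (C \ closed disc)]. *)

Lemma norm_unity_root (R : numDomainType) (n : nat) (x : R) :
  (0 < n)%N -> x ^+ n = 1 -> `|x| = 1.
Proof.
by move=> n_gt0 xn1; apply/eqP; rewrite -(pexpr_eq1 n_gt0) // -normrX xn1 normr1.
Qed.

Lemma twisted_equivariance_expr (R : comPzRingType) (q : R -> R) (alpha beta q0 : R) :
  (forall x, q (alpha * x) - q0 = beta * (q x - q0)) ->
  forall k x, q (alpha ^+ k * x) - q0 = beta ^+ k * (q x - q0).
Proof.
move=> qalpha; elim=> [|k IHk] x; first by rewrite !expr0 !mul1r.
by rewrite exprS -mulrA qalpha IHk exprS mulrA.
Qed.

Section ConjugateLift.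
Variable R : realType.
Local Notation C := R[i].

Variables (Pi h hinv ht : C * C -> C * C).
Hypothesis hinvK : cancel h hinv.
Hypothesis Pi_ht : forall w, covdom w -> h (Pi w) = Pi (ht w).

Lemma is_lift_conj (f L L' : C * C -> C * C) :
  (forall w, covdom w -> exists2 w0, covdom w0 & ht w0 = w) ->
  is_lift Pi f L ->
  (forall w, covdom w -> covdom (L' w)) ->
  (forall w, covdom w -> ht (L w) = L' (ht w)) ->
  is_lift Pi (fun w => h (f (hinv w))) L'.
Proof.
move=> ht_onto Lf L'dom htL w wdom; split; first exact: L'dom.
have [w0 w0dom <-] := ht_onto w wdom.
rewrite -Pi_ht // hinvK; have [Lw0dom <-] := Lf w0 w0dom.
by rewrite Pi_ht // htL.
Qed.

Lemma is_lift_conj_inv (f L L' : C * C -> C * C) :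
  (forall w, covdom w -> covdom (ht w)) ->
  is_lift Pi f L ->
  (forall w, covdom w -> covdom (L' w)) ->
  (forall w, covdom w -> ht (L' w) = L (ht w)) ->
  is_lift Pi (fun w => hinv (f (h w))) L'.
Proof.
move=> htdom Lf L'dom htL' w wdom; split; first exact: L'dom.
rewrite Pi_ht //; have [_ <-] := Lf _ (htdom w wdom).
by rewrite -htL' // -Pi_ht ?hinvK //; apply: L'dom.
Qed.

End ConjugateLift.

Section HenonLift.
Variable R : realType.
Local Notation C := R[i].

Lemma henon_invK (p : {poly C}) (a : C) : a != 0 -> cancel (henon p a) (henon_inv p a).
Proof. by move=> a0 [x y]; rewrite /henon_inv /henon /=; congr (_, _); field. Qed.

Lemma covdom_affine_lift (beta gamma alpha : C) (w : C * C) :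
  `|alpha| = 1 -> covdom w -> covdom (affine_lift beta gamma alpha w).
Proof. by move=> alpha_norm; rewrite /covdom /= normrM alpha_norm mul1r. Qed.

Lemma covdom_Htilde (d : nat) (a : C) (Q : {poly C}) (w : C * C) :
  (0 < d)%N -> covdom w -> covdom (Htilde d a Q w).
Proof. by move=> d_gt0; rewrite /covdom /= normrX => w2_gt1; rewrite exprn_egt1 // -lt0n. Qed.

Lemma Htilde_onto (d : nat) (a : C) (Q : {poly C}) (w : C * C) :
  (0 < d)%N -> a != 0 -> covdom w -> exists2 w0, covdom w0 & Htilde d a Q w0 = w.
Proof.
move: w => [x y] d_gt0 a0 ydom; set r := d.-root y.
have rK : r ^+ d = y by rewrite rootCK.
have d0 : d%:R != 0 :> C by rewrite pnatr_eq0 -lt0n.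
exists ((x - Q.[r]) * (d%:R / a), r).
  by rewrite /covdom /= -(expr_gt1 d_gt0) // -normrX rK.
by rewrite /Htilde /= rK; congr (_, _); field; rewrite d0 a0.
Qed.

Lemma Htilde_affine_lift (d : nat) (a : C) (Q : {poly C}) (alpha beta gamma c : C) :
  (forall z, Q.[alpha * z] = beta * Q.[z] - c) ->
  Htilde d a Q \o affine_lift beta gamma alpha
  =1 affine_lift beta (a / d%:R * gamma - c) (alpha ^+ d) \o Htilde d a Q.
Proof.
move=> Q_twist [z zeta]; rewrite /Htilde /affine_lift /= Q_twist exprMn.
by congr (_, _); ring.
Qed.

Lemma affine_lift_Htilde (d : nat) (a : C) (Q : {poly C}) (alpha beta gamma c : C) :
  (0 < d)%N -> a != 0 -> alpha ^+ (d * d) = alpha ->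
  (forall z, Q.[alpha ^+ d * z] = beta * Q.[z] - c) ->
  Htilde d a Q \o affine_lift beta (d%:R / a * (gamma + c)) (alpha ^+ d)
  =1 affine_lift beta gamma alpha \o Htilde d a Q.
Proof.
move=> d_gt0 a0 alpha_dd Q_twist [z zeta].
have d0 : d%:R != 0 :> C by rewrite pnatr_eq0 -lt0n.
rewrite /Htilde /affine_lift /= Q_twist exprMn -exprM alpha_dd.
by congr (_, _); field; rewrite d0 a0.
Qed.

End HenonLift.

Theorem lemma3p1 (R : realType) (d : nat) (p : {poly R[i]}) (a : R[i])
  (Q : {poly R[i]}) (Pi : R[i] * R[i] -> R[i] * R[i])
  (f : R[i] * R[i] -> R[i] * R[i]) (alpha beta gamma : R[i]) :
  (2 <= d)%N ->
  centered_monic_deg d p ->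
  a != 0 ->
  (* the Hubbard--Oberste-Vorth covering and the lift of H *)
  Qshape d Q ->
  (forall w, covdom w -> Uplus p a (Pi w)) ->
  (forall w, Uplus p a w -> exists2 w', covdom w' & Pi w' = w) ->
  (forall w, covdom w -> henon p a (Pi w) = Pi (Htilde d a Q w)) ->
  (* the automorphism f and its fibre-preserving lift *)
  aut_Uplus p a f ->
  beta ^+ d.-1 = 1 ->
  alpha ^+ d.+1 = beta ->
  (forall zeta, alpha ^+ d.+1 * Q.[zeta] = Q.[alpha * zeta] + c_alpha d Q alpha) ->
  is_lift Pi f (affine_lift beta gamma alpha) ->
  is_lift Pi (PhiP p a f)
    (affine_lift beta (a / d%:R * gamma - c_alpha d Q alpha) (alpha ^+ d)) /\
  is_lift Pi (PhiM p a f)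
    (affine_lift beta (d%:R / a * (gamma + c_alpha d Q alpha)) (alpha ^+ d)).
Proof.
move=> d_ge2 _ a0 _ _ _ Pi_Htilde _ beta_d1 alpha_d1 Q_alpha f_lift.
have d_gt0 : (0 < d)%N by apply: leq_trans d_ge2.
set c := c_alpha d Q alpha.
have alpha_unity : alpha ^+ (d.+1 * d.-1) = 1 by rewrite exprM alpha_d1 beta_d1.
have alpha_norm : `|alpha| = 1.
  by apply: norm_unity_root alpha_unity; rewrite muln_gt0 /=; lia.
have alpha_dd : alpha ^+ (d * d) = alpha.
  have -> : (d * d = d.+1 * d.-1 + 1)%N by nia.
  by rewrite exprD alpha_unity mul1r.
have beta_d : beta ^+ d = beta by rewrite -(prednK d_gt0) exprS beta_d1 mulr1.
have Q_twist z : Q.[alpha * z] = beta * Q.[z] - c by rewrite -alpha_d1 Q_alpha addrK.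
have Q_twist_d z : Q.[alpha ^+ d * z] = beta * Q.[z] - c.
  have cE : c = beta * Q`_0 - Q`_0 by rewrite /c /c_alpha alpha_d1.
  have Q_twist0 x : Q.[alpha * x] - Q`_0 = beta * (Q.[x] - Q`_0) by rewrite Q_twist cE; ring.
  rewrite -[LHS](subrK Q`_0) (twisted_equivariance_expr (q := horner Q) Q_twist0).
  by rewrite beta_d cE; ring.
have covdom_lift g w : covdom w -> covdom (affine_lift beta g (alpha ^+ d) w).
  by apply: covdom_affine_lift; rewrite normrX alpha_norm expr1n.
split.
- apply: (is_lift_conj (henon_invK p a0) Pi_Htilde _ f_lift (covdom_lift _)).
    by move=> w; apply: Htilde_onto.
  by move=> w _; apply: (Htilde_affine_lift d a gamma Q_twist).
- apply: (is_lift_conj_inv (henon_invK p a0) Pi_Htilde _ f_lift (covdom_lift _)).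
    by move=> w; apply: covdom_Htilde.
  by move=> w _; apply: (affine_lift_Htilde gamma d_gt0 a0 alpha_dd Q_twist_d).
Qed.
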